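(* Let $\lambda$ be a strict partition, $\mu$ any probability distribution on $J(P^{\mathrm{shift}}_\lambda)$, and $[i,j]\in P^{\mathrm{shift}}_\lambda$. Then \[\mathbb{E}(\mu;R^{\mathrm{shift}}_{ij})=1+\sum_{c\in C^{\mathrm{shift}}_{ij}(\lambda)}\mathbb{P}(\nu\sim\mu;\ c\in\nu).\]
   Context: Strict partitions, $P^{\mathrm{shift}}_\lambda$ (boxes $[i,j]$, $1\le i\le\ell(\lambda)$, $i\le j\le i+\lambda_i-1$, ordered componentwise), and toggle statistics $\mathcal{T}^\pm_p$ (with $\mathcal{T}^+_p(I)=1$ iff $p\notin I$ is minimal in the complement, $\mathcal{T}^-_p(I)=1$ iff $p\in I$ is maximal in $I$) are as usual. Order ideals of $P^{\mathrm{shift}}_\lambda$ are identified with strict partitions $\nu\subseteq\lambda$. The shifted rook is $R^{\mathrm{shift}}_{ij}:=\sum_{i'\le i,j'\le j}\mathcal{T}^+_{[i',j']}+\sum_{i'\ge i,j'\ge j}\mathcal{T}^-_{[i',j']}-\sum_{i'<i,j'<j,i'<j'}\mathcal{T}^-_{[i',j']}-\sum_{i'>i,j'>j,i'<j'}\mathcal{T}^+_{[i',j']}$ (sums over boxes of $P^{\mathrm{shift}}_\lambda$). Outward corners: $C^{\mathrm{shift}}(\lambda)$ is the set of indices $1\le t\le\ell(\lambda)-1$ with $\lambda_t-\lambda_{t+1}\ge2$; the corner $c=c_t$ occurs at lattice point $(t,\,t+\lambda_{t+1})$ (row coordinate, column coordinate; box $[i,j]$ has southeast corner at lattice point $(i,j)$);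 this is a north step followed by an east step on the southeast border of the shifted diagram. An order ideal $\nu$ contains $c_t$ (written $c_t\in\nu$) iff $\nu_{t+1}=\lambda_{t+1}$ and $\nu_t\ge\lambda_{t+1}+2$. $C^{\mathrm{shift}}_{ij}(\lambda)$ is the set of corners occurring at $(t,t+\lambda_{t+1})$ strictly southeast of the center of box $[i,j]$, i.e. with $t\ge i$ and $t+\lambda_{t+1}\ge j$. *)

From HB Require Import structures.
From mathcomp Require Import all_boot all_order all_algebra.
Set Implicit Arguments. Unset Strict Implicit. Unset Printing Implicit Defensive.
Import Order.TTheory GRing.Theory Num.Theory.

Definition strict_partition (lam : seq nat) : bool :=
  sorted gtn lam && (0 \notin lam).

(* lam_t with 1-based indexing (0 beyond the length). *)
Definition part (lam : seq nat) (t : nat) : nat := nth 0 lam t.-1.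

(* Bound on coordinates of boxes: all boxes [i,j] of the shifted diagram
   satisfy i, j < bnd lam. *)
Definition bnd (lam : seq nat) : nat := (size lam + head 0 lam).+1.

Definition box (lam : seq nat) : finType := ('I_(bnd lam) * 'I_(bnd lam))%type.

Definition inPn (lam : seq nat) (i j : nat) : bool :=
  [&& 1 <= i, i <= size lam, i <= j & j < i + part lam i].

Definition inP (lam : seq nat) (p : box lam) : bool := inPn lam p.1 p.2.

Definition boxle (lam : seq nat) (p q : box lam) : bool :=
  (p.1 <= q.1)%N && (p.2 <= q.2)%N.

Definition is_ideal (lam : seq nat) (I : {set box lam}) : bool :=
  [forall p, (p \in I) ==> inP p] &&
  [forall p, forall q, [&& p \in I, inP q & boxle q p] ==> (q \in I)].

Definition Tplus (lam : seq nat) (I : {set box lam}) (p : box lam) : nat :=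
  [&& inP p, p \notin I &
      [forall q, [&& inP q, boxle q p & q != p] ==> (q \in I)]].

Definition Tminus (lam : seq nat) (I : {set box lam}) (p : box lam) : nat :=
  [&& inP p, p \in I &
      [forall q, [&& inP q, boxle p q & q != p] ==> (q \notin I)]].

Definition Rshift (lam : seq nat) (i j : nat) (I : {set box lam}) : int :=
  (\sum_(p : box lam | [&& inP p, p.1 <= i & p.2 <= j]%N) Tplus I p)%:Z
  + (\sum_(p : box lam | [&& inP p, i <= p.1 & j <= p.2]%N) Tminus I p)%:Z
  - (\sum_(p : box lam | [&& inP p, p.1 < i, p.2 < j & p.1 < p.2]%N) Tminus I p)%:Z
  - (\sum_(p : box lam | [&& inP p, i < p.1, j < p.2 & p.1 < p.2]%N) Tplus I p)%:Z.

Definition rowlen (lam : seq nat) (I : {set box lam}) (t : nat) : nat :=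
  #|[set p in I | val p.1 == t]|.

Definition is_corner (lam : seq nat) (t : nat) : bool :=
  [&& 1 <= t, t <= (size lam).-1 & part lam t.+1 + 2 <= part lam t].

Definition corner_in (lam : seq nat) (t : nat) (I : {set box lam}) : bool :=
  (rowlen I t.+1 == part lam t.+1) && (part lam t.+1 + 2 <= rowlen I t).

Definition corner_ij (lam : seq nat) (i j t : nat) : bool :=
  [&& is_corner lam t, i <= t & j <= t + part lam t.+1].

Local Open Scope ring_scope.

Definition is_distribution (R : realFieldType) (lam : seq nat)
    (mu : {set box lam} -> R) : Prop :=
  (forall I, 0 <= mu I) /\ (forall I, ~~ is_ideal I -> mu I = 0) /\
  \sum_(I : {set box lam} | is_ideal I) mu I = 1.

Definition expect (R : realFieldType) (lam : seq nat)
    (mu : {set box lam} -> R) (f : {set box lam} -> int) : R :=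
  \sum_(I : {set box lam} | is_ideal I) mu I * (f I)%:~R.

Definition prob (R : realFieldType) (lam : seq nat)
    (mu : {set box lam} -> R) (E : {set box lam} -> bool) : R :=
  \sum_(I : {set box lam} | is_ideal I && E I) mu I.

From HB Require Import structures.
From mathcomp Require Import all_boot all_order all_algebra zify.
Import Order.TTheory GRing.Theory Num.Theory.
Set Implicit Arguments. Unset Strict Implicit. Unset Printing Implicit Defensive.

(* An order ideal nu is determined by its row lengths nu_1 > nu_2 > ... (strictly
   decreasing while positive, nu_t <= lam_t).  In row a the only box [T+] can toggle
   is the first box (a, a + nu_a) outside nu and the only one [T-] can toggle is the
   last box (a, a + nu_a - 1) of nu, so each of the four sums in R^shift_ij counts rows.
   Comparing consecutive rows gives two telescoping identities: over the rows a <= i,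
   the T+ rows weakly northwest of [i,j] outnumber the T- rows strictly northwest by
   [row i ends before column j]; over the rows a >= i, the T- rows weakly southeast
   outnumber the T+ rows strictly southeast by [row i reaches column j] plus the number
   of corners c_t in C^shift_ij(lam) lying in nu.  Exactly one of the two brackets is 1,
   so R^shift_ij(nu) = 1 + #{c in C^shift_ij(lam) | c in nu} for every ideal nu, and
   the theorem follows by linearity of expectation. *)

Lemma sum_nat_telescope (f g h : nat -> nat) m n : m <= n ->
  (forall k, m <= k < n -> f k + h k.+1 = h k + g k) ->
  \sum_(m <= k < n) f k + h n = h m + \sum_(m <= k < n) g k.
Proof.
elim: n => [|n IHn]; first by rewrite leqn0 => /eqP-> _; rewrite !big_geq // addnC.
rewrite leq_eqVlt => /predU1P[<- _|]; first by rewrite !big_geq // addnC.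
rewrite ltnS => mn step.
rewrite !big_nat_recr //= -addnA step ?mn //= addnA IHn ?addnA // => k /andP[mk kn].
by apply: step; rewrite mk ltnW.
Qed.

Lemma eq_sum_nat_supp (F : nat -> nat) m n m' n' :
  (forall a, 0 < F a -> (m <= a < n) && (m' <= a < n')) ->
  \sum_(m <= a < n) F a = \sum_(m' <= a < n') F a.
Proof.
move=> suppF; set K := maxn n n'.
have widen p q : q <= K -> (forall a, 0 < F a -> p <= a < q) ->
    \sum_(p <= a < q) F a = \sum_(0 <= a < K) F a.
  move=> qK suppPQ; rewrite (big_nat_widen _ _ _ _ _ qK).
  rewrite (big_nat_widenl _ _ _ _ _ (leq0n p)) [RHS]big_mkcond big_mkcond.
  apply: eq_bigr => a _; case: ifP => //= /negbT outPQ.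
  by apply/esym/eqP; rewrite -leqn0 leqNgt; apply: contra outPQ => /suppPQ /andP[-> ->].
rewrite (widen m n) ?(widen m' n') ?leq_maxl ?leq_maxr // => a /suppF /andP[] //.
Qed.

Lemma sum_interval_pred N a b : \sum_(x < N) (a <= x < b) = minn b N - a.
Proof. by elim: N => [|N IH]; rewrite ?big_ord0 ?big_ord_recr /= ?IH; lia. Qed.

Lemma interval_predE (P : pred nat) a N :
  (forall b, P b -> a <= b < N) -> (forall b b', P b -> a <= b' <= b -> P b') ->
  forall b, P b = (a <= b < a + \sum_(x < N) P x).
Proof.
move=> bndP closedP b; apply/idP/idP => [Pb|/andP[ab]].
  have /andP[ab bN] := bndP b Pb.
  have : \sum_(x < N) (a <= x < b.+1) <= \sum_(x < N) P x.
    apply: leq_sum => x _; case: (boolP (a <= x < b.+1)) => //= hx.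
    by rewrite lt0b (closedP b) //; lia.
  rewrite sum_interval_pred; lia.
apply: contraTT => nPb.
have : \sum_(x < N) P x <= \sum_(x < N) (a <= x < b).
  apply: leq_sum => x _; case: (boolP (P x)) => //= Px.
  have /andP[ax xN] := bndP x Px; rewrite lt0b ax /= ltnNge.
  by apply: (contraNN _ nPb) => bx; apply: (closedP x) => //; rewrite ab.
rewrite sum_interval_pred; lia.
Qed.

Section StaircaseRows.
Variable nu : nat -> nat.
Hypothesis nu_ltS : forall a, 0 < a -> 0 < nu a.+1 -> nu a.+1 < nu a.

Lemma row_end_mono a b : 0 < a <= b -> 0 < nu b -> b + nu b <= a + nu a.
Proof.
elim: b => [|b IH] /andP[a0 ab] nub; first by lia.
have [->|lt_ab] := eqVneq a b.+1; first by [].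
have := nu_ltS (_ : 0 < b) nub; have := IH _ (_ : 0 < nu b); lia.
Qed.

End StaircaseRows.

Lemma part_eq0 lam a : size lam < a -> part lam a = 0.
Proof. by move=> la; rewrite /part nth_default // -subn1; lia. Qed.

Section StrictPartition.
Variable lam : seq nat.
Hypothesis lam_strict : strict_partition lam.

Lemma part_gt0 a : 0 < a <= size lam -> 0 < part lam a.
Proof.
case/andP: lam_strict => _ lam0 /andP[a0 a_le]; rewrite lt0n.
by apply: contraNneq lam0 => <-; apply: mem_nth; rewrite prednK.
Qed.

Lemma part_ltS a : 0 < a -> 0 < part lam a.+1 -> part lam a.+1 < part lam a.
Proof.
move=> a0 pa; have a_lt : a < size lam.
  by rewrite ltnNge; apply: contraTN pa => la; rewrite part_eq0 ?ltnS.
have gtn_trans : transitive gtn by move=> y x z /= yx zy; apply: ltn_trans zy yx.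
case/andP: lam_strict => /(sorted_ltn_nth gtn_trans 0) lt_nth _.
by rewrite /part /=; apply: lt_nth; rewrite ?inE ?prednK // ltnW.
Qed.

Lemma part_end_mono a b : 0 < a <= b -> b <= size lam -> b + part lam b <= a + part lam a.
Proof.
move=> ab lb; apply: (@row_end_mono (part lam) part_ltS) => //; apply: part_gt0; lia.
Qed.

Lemma inPn_bnd a b : inPn lam a b -> a < bnd lam /\ b < bnd lam.
Proof.
move=> /and4P[a0 al ab bp]; have := @part_end_mono 1 a.
rewrite /bnd -nth0 /part /= in bp *; lia.
Qed.

Lemma box_forallP (Q : nat -> nat -> bool) :
  reflect (forall a b, inPn lam a b -> Q a b) [forall q : box lam, inP q ==> Q q.1 q.2].
Proof.
apply: (iffP forallP) => [allQ a b ab|allQ q]; last exact/implyP/allQ.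
have [a_bnd b_bnd] := inPn_bnd ab.
by have /implyP := allQ (Ordinal a_bnd, Ordinal b_bnd); apply.
Qed.

Lemma sum_boxes_rows (C : nat -> nat -> bool) (T : box lam -> nat) (f : nat -> nat)
    (g : pred nat) :
  (forall p : box lam, T p = (p.2 == f p.1 :> nat) && g p.1) ->
  (forall a, g a -> inPn lam a (f a)) ->
  \sum_(p : box lam | inP p && C p.1 p.2) T p = \sum_(0 <= a < bnd lam) (C a (f a) && g a).
Proof.
move=> T_row g_box; rewrite (eq_bigr _ (fun p _ => T_row p)) big_mkcond /=.
rewrite -(pair_big xpredT xpredT (fun a b : 'I_(bnd lam) =>
  if inP (a, b) && C a b then nat_of_bool ((b == f a :> nat) && g a) else 0)) big_mkord /=.
apply: eq_bigr => a _; have [ga|nga] := boolP (g a); last first.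
  by rewrite big1 ?andbF // => b _; rewrite andbF; case: ifP.
have fa_box := g_box a ga; have [_ fa_bnd] := inPn_bnd fa_box.
rewrite (bigD1 (Ordinal fa_bnd)) //= big1 => [|b neq_b].
  by rewrite /inP /= fa_box /= eqxx !andbT addn0; case: C.
rewrite andbT; case: ifP => // _; apply/eqP; rewrite eqb0.
by apply: contra neq_b => /eqP eq_b; apply/eqP/val_inj.
Qed.

End StrictPartition.

Section ToggleRows.
Variables (lam : seq nat) (nu : nat -> nat).
Hypotheses (lam_strict : strict_partition lam)
  (nu_le_part : forall a, nu a <= part lam a)
  (nu_ltS : forall a, 0 < a -> 0 < nu a.+1 -> nu a.+1 < nu a).

(* [plus_row a] says that [T+] toggles the box (a, a + nu a) of the ideal with row
   lengths [nu], [minus_row a] that [T-] toggles (a, a + nu a - 1). *)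
Definition plus_row a := inPn lam a (a + nu a) && ((a == 1) || (nu a + 2 <= nu a.-1)).
Definition minus_row a := inPn lam a (a + nu a).-1 && ((nu a == 1) || (nu a.+1 + 2 <= nu a)).
Definition corner_row t := (nu t.+1 == part lam t.+1) && (part lam t.+1 + 2 <= nu t).

Variables i j : nat.

Definition plus_nw a := (a <= i) && (a + nu a <= j) && plus_row a.
Definition minus_se a := (i <= a) && (j <= (a + nu a).-1) && minus_row a.
Definition minus_nw a :=
  (a < i) && (((a + nu a).-1 < j) && (a < (a + nu a).-1)) && minus_row a.
Definition plus_se a := (i < a) && ((j < a + nu a) && (a < a + nu a)) && plus_row a.
Definition corner_se t := corner_ij lam i j t && corner_row t.

Definition row_reaches a := (0 < nu a) && (j < a + nu a).
Definition row_ends_before a := (0 < a) && (a + nu a <= j).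

Hypothesis ij_box : inPn lam i j.

Lemma minus_seE m : i <= m ->
  minus_se m = row_reaches m && ((nu m == 1) || (nu m.+1 + 2 <= nu m)).
Proof.
move: ij_box => /and4P[i0 _ _ _] im; have := nu_le_part m.
have := @part_eq0 lam m; rewrite /minus_se /row_reaches /minus_row /inPn -subn1 im.
lia.
Qed.

Lemma plus_seS m : i <= m ->
  plus_se m.+1 = [&& row_reaches m.+1, nu m.+1 < part lam m.+1 & nu m.+1 + 2 <= nu m].
Proof.
move: ij_box => /and4P[i0 _ _ _] im; have := @part_eq0 lam m.+1.
rewrite /plus_se /row_reaches /plus_row /inPn /=.
lia.
Qed.

Lemma corner_seE m : i <= m ->
  corner_se m = [&& row_reaches m.+1, nu m.+1 == part lam m.+1 & part lam m.+1 + 2 <= nu m].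
Proof.
move: ij_box => /and4P[i0 _ _ _] im; have := nu_le_part m.
have := @part_eq0 lam m.+1; have := @part_gt0 _ lam_strict m.+1.
rewrite /corner_se /corner_ij /is_corner /corner_row /row_reaches im -subn1.
lia.
Qed.

Lemma minus_se_step m : i <= m ->
  minus_se m + row_reaches m.+1 = row_reaches m + (plus_se m.+1 + corner_se m).
Proof.
move=> im; have m0 : 0 < m by case/andP: ij_box => i0 _; apply: leq_trans im.
rewrite minus_seE // plus_seS // corner_seE // /row_reaches.
have := nu_le_part m.+1; have := nu_ltS m0; have := @row_end_mono nu nu_ltS m m.+1.
lia.
Qed.

Lemma plus_nwS m : m < i ->
  plus_nw m.+1 = (m.+1 + nu m.+1 <= j) && ((m == 0) || (nu m.+1 + 2 <= nu m)).
Proof.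
move: ij_box => /and4P[_ il ij jp] mi.
have := @part_end_mono _ lam_strict m.+1 i; rewrite /plus_nw /plus_row /inPn /=.
lia.
Qed.

Lemma minus_nwE m : m < i ->
  minus_nw m = [&& 0 < m, m + nu m <= j & nu m.+1 + 2 <= nu m].
Proof.
move: ij_box => /and4P[_ il _ _] mi; have := nu_le_part m.
rewrite /minus_nw /minus_row /inPn -subn1; lia.
Qed.

Lemma minus_nw_step m : m < i ->
  minus_nw m + row_ends_before m.+1 = row_ends_before m + plus_nw m.+1.
Proof.
move=> mi; rewrite minus_nwE // plus_nwS // /row_ends_before.
move: ij_box => /and4P[_ _ ij _]; have := @row_end_mono nu nu_ltS m m.+1.
lia.
Qed.

Lemma sum_corner_se N : size lam < N ->
  \sum_(1 <= t < size lam | corner_ij lam i j t) corner_row t = \sum_(i <= t < N) corner_se t.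
Proof.
move=> lN; rewrite big_mkcond (eq_bigr (fun t => nat_of_bool (corner_se t))) => [|t _].
  by apply: eq_sum_nat_supp => t; rewrite lt0b /corner_se /corner_ij /is_corner -subn1; lia.
by rewrite /corner_se; case: ifP.
Qed.

Lemma sum_minus_se N : size lam < N ->
  \sum_(0 <= a < N) minus_se a =
    row_reaches i + (\sum_(0 <= a < N) plus_se a + \sum_(i <= t < N) corner_se t).
Proof.
move=> lN; have /and4P[i0 il _ _] := ij_box.
have step k : i <= k < N ->
    minus_se k + row_reaches k.+1 = row_reaches k + (plus_se k.+1 + corner_se k).
  by case/andP=> ik _; apply: minus_se_step.
have shift : \sum_(i <= m < N) plus_se m.+1 = \sum_(i.+1 <= a < N.+1) plus_se a.
  by rewrite big_add1.
have := sum_nat_telescope (ltnW (leq_ltn_trans il lN)) step.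
rewrite big_split /= shift (eq_sum_nat_supp (m := i.+1) (m' := 0) (n' := N)) => [|a]; last first.
  by rewrite lt0b /plus_se /plus_row /inPn; lia.
rewrite (eq_sum_nat_supp (F := fun a => nat_of_bool (minus_se a)) (m := 0) (m' := i) (n' := N)).
  by have := nu_le_part N; have := @part_eq0 lam N; rewrite /row_reaches; lia.
by move=> a; rewrite lt0b /minus_se /minus_row /inPn -subn1; lia.
Qed.

Lemma sum_plus_nw N : size lam < N ->
  \sum_(0 <= a < N) plus_nw a = row_ends_before i + \sum_(0 <= a < N) minus_nw a.
Proof.
move=> lN; have /and4P[i0 il _ _] := ij_box.
have step k : 0 <= k < i ->
    minus_nw k + row_ends_before k.+1 = row_ends_before k + plus_nw k.+1.
  by case/andP=> _ ki; apply: minus_nw_step.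
have := sum_nat_telescope (leq0n i) step.
have -> : \sum_(0 <= m < i) plus_nw m.+1 = \sum_(1 <= a < i.+1) plus_nw a.
  by rewrite big_add1.
rewrite (eq_sum_nat_supp (m := 1) (m' := 0) (n' := N)) => [|a]; last first.
  by rewrite lt0b /plus_nw /plus_row /inPn; lia.
rewrite (eq_sum_nat_supp (m := 0) (n := i) (m' := 0) (n' := N)) => [|a]; last first.
  by rewrite lt0b /minus_nw; lia.
by rewrite /row_ends_before; lia.
Qed.

Lemma toggle_rows_balance N : size lam < N ->
  \sum_(0 <= a < N) plus_nw a + \sum_(0 <= a < N) minus_se a =
  1 + \sum_(1 <= t < size lam | corner_ij lam i j t) corner_row t
    + \sum_(0 <= a < N) minus_nw a + \sum_(0 <= a < N) plus_se a.
Proof.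
move=> lN; rewrite sum_plus_nw // sum_minus_se // (sum_corner_se lN).
by have /and4P[i0 _ ij _] := ij_box; rewrite /row_ends_before /row_reaches; lia.
Qed.

End ToggleRows.

Definition ideal_has lam (I : {set box lam}) a b :=
  [exists p in I, (p.1 == a :> nat) && (p.2 == b :> nat)].

Section IdealRows.
Variables (lam : seq nat) (I : {set box lam}).
Hypotheses (lam_strict : strict_partition lam) (I_ideal : is_ideal I).

Lemma ideal_hasE (p : box lam) : ideal_has I p.1 p.2 = (p \in I).
Proof.
apply/existsP/idP => [[q /and3P[qI /eqP eq1 /eqP eq2]]|pI]; last by exists p; rewrite pI !eqxx.
by case: p q eq1 eq2 qI => [x y] [x' y'] /= /val_inj <- /val_inj <-.
Qed.

Lemma ideal_has_inPn a b : ideal_has I a b -> inPn lam a b.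
Proof.
case/andP: I_ideal => /forallP I_box _ /existsP[p /and3P[pI /eqP <- /eqP <-]].
by have /implyP := I_box p; apply.
Qed.

Lemma ideal_has_down a b a' b' : ideal_has I a b -> inPn lam a' b' ->
  a' <= a -> b' <= b -> ideal_has I a' b'.
Proof.
move=> /existsP[p /and3P[pI /eqP pa /eqP pb]] ab' aa' bb'.
have [a'_bnd b'_bnd] := inPn_bnd lam_strict ab'.
apply/existsP; exists (Ordinal a'_bnd, Ordinal b'_bnd); rewrite !eqxx !andbT.
case/andP: I_ideal => _ /forallP/(_ p)/forallP/(_ (Ordinal a'_bnd, Ordinal b'_bnd)).
by rewrite pI /inP /boxle /= ab' pa pb aa' bb' => /implyP; apply.
Qed.

Lemma rowlen_sum a : rowlen I a = \sum_(b < bnd lam) ideal_has I a b.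
Proof.
have -> : \sum_(b < bnd lam) ideal_has I a b = #|[set b : 'I_(bnd lam) | ideal_has I a b]|.
  by rewrite -sum1dep_card [RHS]big_mkcond; apply: eq_bigr => b _; case: ideal_has.
have -> : [set b : 'I_(bnd lam) | ideal_has I a b] = [set p.2 | p in [set p in I | val p.1 == a]].
  apply/setP => b; rewrite inE; apply/existsP/imsetP => [[p /and3P[pI pa /eqP pb]]|].
    by exists p; rewrite ?inE ?pI //; apply: val_inj.
  by case=> p; rewrite inE => /andP[pI pa] ->; exists p; rewrite pI pa eqxx.
rewrite card_in_imset // => p q; rewrite !inE => /andP[_ /eqP pa] /andP[_ /eqP qa] pq.
by case: p q pa qa pq => [x y] [x' y'] /= <- /val_inj -> ->.
Qed.

Lemma ideal_has_rowlen a b : ideal_has I a b = (a <= b < a + rowlen I a).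
Proof.
rewrite rowlen_sum; apply: interval_predE => [b' /ideal_has_inPn ab'|b' b'' ab' b''b'].
  by have [_ ->] := inPn_bnd lam_strict ab'; case/and4P: ab' => _ _ ->.
have /and4P[a0 al _ b'p] := ideal_has_inPn ab'.
by apply: ideal_has_down ab' _ (leqnn a) _; rewrite ?/inPn; lia.
Qed.

Lemma mem_ideal_rowlen (p : box lam) : (p \in I) = (p.1 <= p.2 < p.1 + rowlen I p.1).
Proof. by rewrite -ideal_hasE ideal_has_rowlen. Qed.

Lemma rowlen_le_part a : rowlen I a <= part lam a.
Proof.
have [->//|nu_pos] := posnP (rowlen I a).
have : ideal_has I a (a + rowlen I a).-1 by rewrite ideal_has_rowlen -subn1; lia.
by case/ideal_has_inPn/and4P => _ _ _; rewrite -subn1; lia.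
Qed.

Lemma rowlen_ltS a : 0 < a -> 0 < rowlen I a.+1 -> rowlen I a.+1 < rowlen I a.
Proof.
move=> a0 nu_pos; have nuS_le := rowlen_le_part a.+1.
have last_box : ideal_has I a.+1 (a + rowlen I a.+1) by rewrite ideal_has_rowlen; lia.
have /and4P[_ aS_le _ _] := ideal_has_inPn last_box.
have := part_ltS lam_strict a0 (leq_trans nu_pos nuS_le).
have := @ideal_has_down _ _ a (a + rowlen I a.+1) last_box.
by rewrite ideal_has_rowlen /inPn; lia.
Qed.

Lemma Tplus_rowlen (p : box lam) :
  Tplus I p = (p.2 == p.1 + rowlen I p.1 :> nat) && plus_row lam (rowlen I) p.1.
Proof.
rewrite /Tplus /inP; congr nat_of_bool; case: p => [[a a_bnd] [b b_bnd]] /=.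
pose below a' b' :=
  (a' <= a) && (b' <= b) && ((a' != a) || (b' != b)) ==> (b' < a' + rowlen I a').
have -> : [forall q, [&& inP q, boxle q (Ordinal a_bnd, Ordinal b_bnd)
                   & q != (Ordinal a_bnd, Ordinal b_bnd)] ==> (q \in I)] =
    [forall q : box lam, inP q ==> below q.1 q.2].
  apply: eq_forallb => -[[a' ?] [b' ?]].
  rewrite mem_ideal_rowlen /inP /boxle xpair_eqE -!val_eqE /= negb_and.
  by case: (boolP (inPn lam a' b')) => //= /and4P[_ _ -> _].
rewrite mem_ideal_rowlen /=; have nu_le := rowlen_le_part a.
apply/idP/idP => [/and3P[ab out /(@box_forallP _ lam_strict below) lower]|].
  have /and4P[a0 al ab_le bp] := ab.
  have b_end : b = a + rowlen I a.
    by have := lower a b.-1; rewrite /below /inPn -subn1; lia.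
  rewrite /plus_row -b_end ab eqxx /=; case: eqP => //= a_ne1.
  have := part_ltS lam_strict (_ : 0 < a.-1); rewrite prednK //.
  by have := lower a.-1 b; rewrite /below /inPn -!subn1; lia.
case/andP=> /eqP b_end /andP[ab a_cond]; rewrite b_end ab /=.
apply/andP; split; first by lia.
apply/(@box_forallP _ lam_strict below) => a' b' /and4P[a'0 _ _ _].
have := row_end_mono rowlen_ltS (_ : 0 < a' <= a.-1).
move: a_cond; rewrite /below -!subn1 => a_cond row_mono; apply/implyP.
move=> /andP[/andP[a'a b'b]]; have [lt_a'a|ge_a'a] := ltnP a' a; first by lia.
have -> : a' = a by apply/anti_leq; rewrite a'a ge_a'a.
by rewrite eqxx /=; lia.
Qed.

Lemma Tminus_rowlen (p : box lam) :
  Tminus I p = (p.2 == (p.1 + rowlen I p.1).-1 :> nat) && minus_row lam (rowlen I) p.1.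
Proof.
rewrite /Tminus /inP; congr nat_of_bool; case: p => [[a a_bnd] [b b_bnd]] /=.
pose above a' b' :=
  (a <= a') && (b <= b') && ((a' != a) || (b' != b)) ==> (a' + rowlen I a' <= b').
have -> : [forall q, [&& inP q, boxle (Ordinal a_bnd, Ordinal b_bnd) q
                   & q != (Ordinal a_bnd, Ordinal b_bnd)] ==> (q \notin I)] =
    [forall q : box lam, inP q ==> above q.1 q.2].
  apply: eq_forallb => -[[a' ?] [b' ?]].
  rewrite mem_ideal_rowlen /inP /boxle xpair_eqE -!val_eqE /= negb_and.
  by case: (boolP (inPn lam a' b')) => //= /and4P[_ _ -> _]; rewrite -leqNgt.
rewrite mem_ideal_rowlen /=; have nu_le := rowlen_le_part a.
have nuS_le := rowlen_le_part a.+1.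
apply/idP/idP => [/and3P[ab in_ab /(@box_forallP _ lam_strict above) upper]|].
  have /and4P[a0 al ab_le bp] := ab.
  have b_end : b.+1 = a + rowlen I a.
    by have := upper a b.+1; rewrite /above /inPn; lia.
  rewrite /minus_row -b_end /= eqxx ab /=.
  by have := upper a.+1 b; have := @part_eq0 lam a.+1; rewrite /above /inPn; lia.
case/andP=> /eqP b_end /andP[ab a_cond]; rewrite -b_end in ab; rewrite ab /=.
have /and4P[a0 _ ab_le _] := ab.
apply/andP; split; first by move: ab_le; rewrite b_end -!subn1; lia.
apply/(@box_forallP _ lam_strict above) => a' b' /and4P[a'0 _ a'b' _].
have := row_end_mono rowlen_ltS (_ : 0 < a <= a').
have := row_end_mono rowlen_ltS (_ : 0 < a.+1 <= a'); have := rowlen_ltS a0.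
move: a_cond ab_le; rewrite /above b_end -!subn1 => a_cond ab_le row_mono1 row_mono2 nu_ltS.
apply/implyP => /andP[/andP[aa' bb']]; have [lt_aa'|ge_aa'] := ltnP a a'; first by lia.
have -> : a' = a by apply/anti_leq; rewrite aa' ge_aa'.
by rewrite eqxx /=; lia.
Qed.

End IdealRows.

Lemma Rshift_ideal lam (I : {set box lam}) i j :
  strict_partition lam -> is_ideal I -> inPn lam i j ->
  Rshift i j I = Posz (1 + \sum_(1 <= t < size lam | corner_ij lam i j t) corner_in t I).
Proof.
move=> lam_strict I_ideal ij_box.
have plus_box a : plus_row lam (rowlen I) a -> inPn lam a (a + rowlen I a) by case/andP.
have minus_box a : minus_row lam (rowlen I) a -> inPn lam a (a + rowlen I a).-1.
  by case/andP.
have lam_bnd : size lam < bnd lam by rewrite /bnd ltnS leq_addr.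
rewrite /Rshift (sum_boxes_rows lam_strict (fun a b => (a <= i) && (b <= j))
  (Tplus_rowlen lam_strict I_ideal) plus_box).
rewrite (sum_boxes_rows lam_strict (fun a b => (i <= a) && (j <= b))
  (Tminus_rowlen lam_strict I_ideal) minus_box).
rewrite (sum_boxes_rows lam_strict (fun a b => (a < i) && ((b < j) && (a < b)))
  (Tminus_rowlen lam_strict I_ideal) minus_box).
rewrite (sum_boxes_rows lam_strict (fun a b => (i < a) && ((j < b) && (a < b)))
  (Tplus_rowlen lam_strict I_ideal) plus_box).
have := toggle_rows_balance lam_strict (rowlen_le_part lam_strict I_ideal)
  (rowlen_ltS lam_strict I_ideal) ij_box lam_bnd.
rewrite /plus_nw /minus_se /minus_nw /plus_se /corner_row /corner_in; lia.
Qed.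

Unset Implicit Arguments.
Local Open Scope ring_scope.

Theorem lemma5p4 (R : realFieldType) (lam : seq nat) (mu : {set box lam} -> R)
    (i j : nat) :
  strict_partition lam -> is_distribution mu -> inPn lam i j ->
  expect mu (Rshift i j) =
    1 + \sum_(1 <= t < size lam | corner_ij lam i j t) prob mu (corner_in t).
Proof.
move=> lam_strict [_ [_ mu_total]] ij_box.
rewrite /expect (eq_bigr (fun I => mu I + \sum_(1 <= t < size lam | corner_ij lam i j t)
    (if corner_in t I then mu I else 0))) => [|I I_ideal]; last first.
  rewrite Rshift_ideal // -pmulrn natrD mulrDr natr_sum mulr1 mulr_sumr.
  by congr (_ + _); apply: eq_bigr => t _; case: corner_in; rewrite ?mulr1 ?mulr0.
rewrite big_split /= mu_total exchange_big /=.
by congr (_ + _); apply: eq_bigr => t _; rewrite /prob -big_mkcondr.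
Qed.
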